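(* VD is resistant to cloning. For each $f\in\{\mathrm{MF},\mathrm{BC},\mathrm{MS},\mathrm{FT}\}$, resistance to cloning fails: there exist a finite candidate set $C$ and a profile $P$ over $C$ with clones $a,a'$ such that condition (1) or condition (2) of the definition of resistance to cloning is violated.
   Context: Candidates come from a fixed infinite universe; rules are defined for profiles over every finite candidate set $C$. An approval ballot is a nonempty subset $A\subseteq C$; a profile over $C$ is a finite sequence of ballots. For $c\in C$, $P_{-c}$ is the profile over $C\setminus\{c\}$ obtained by removing $c$ from every ballot (ballots that become empty are discarded), and for an axis $\triangleleft$ on $C$, $\triangleleft_{-c}$ is its restriction to $C\setminus\{c\}$. Two candidates $a,a'$ are clones in $P$ if for every ballot $A\in P$, $a\in A$ iff $a'\in A$. An axis rule $f$ is resistant to cloning if for every profile $P$ in which $a,a'$ are clones: (1) for every $\triangleleft\in f(P)$, $\triangleleft_{-a}\in f(P_{-a})$; and (2) for every $\triangleleft^*\in f(P_{-a})$ there is $\triangleleft\in f(P)$ with $\triangleleft_{-a}=\triangleleft^*$. An axis is a strict linear order $\triangleleft$ on $C$; $a\trianglelefteq b$ means $a\triangleleft b$ or $a=b$. A ballot $A$ is an interval of $\triangleleft$ if for all $a,b\in A$ and every $c$ with $a\triangleleft c\triangleleft b$ we have $c\in A$. For a cost function $\mathrm{cost}_f$, the scoring rule returns $f(P)=\arg\min_{\triangleleft}\sum_{A\in P}\mathrm{cost}_f(A,\triangleleft)$ over all axes on $C$. The five rules are the scoring rules (on every $C$) with costs: $\mathrm{cost}_{\mathrm{VD}}(A,\triangleleft)=0$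 if $A$ is an interval of $\triangleleft$ and $1$ otherwise; $\mathrm{cost}_{\mathrm{MF}}(A,\triangleleft)=\min_{x,y\in A,\ x\trianglelefteq y}\big(|\{z\in A: z\triangleleft x \text{ or } y\triangleleft z\}|+|\{z\notin A: x\triangleleft z\triangleleft y\}|\big)$; $\mathrm{cost}_{\mathrm{BC}}(A,\triangleleft)=|\{b\notin A: a\triangleleft b\triangleleft c \text{ for some } a,c\in A\}|$; $\mathrm{cost}_{\mathrm{MS}}(A,\triangleleft)=\sum_{x\in C\setminus A}\min\big(|\{y\in A:y\triangleleft x\}|,\,|\{y\in A:x\triangleleft y\}|\big)$; $\mathrm{cost}_{\mathrm{FT}}(A,\triangleleft)=\sum_{x\in C\setminus A}|\{y\in A:y\triangleleft x\}|\cdot|\{y\in A:x\triangleleft y\}|$. *)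

From mathcomp Require Import all_boot all_order.
From mathcomp Require Import finmap.
Set Implicit Arguments. Unset Strict Implicit. Unset Printing Implicit Defensive.
Local Open Scope fset_scope.

(* An axis (strict linear order) on C is represented by the duplicate-free
   sequence listing the elements of C from left to right. *)

Definition cand := nat.
Definition ballot := {fset cand}.
Definition profile := seq ballot.
Definition axis := seq cand.

Definition is_axis (C : {fset cand}) (ax : axis) : bool :=
  uniq ax && [forall x : C, val x \in ax] && all (fun x => x \in C) ax.

Definition profile_over (C : {fset cand}) (P : profile) : bool :=
  all (fun A : ballot => (A != fset0) && (A `<=` C)) P.

Definition ax_lt (ax : axis) (x y : cand) : bool :=
  [&& x \in ax, y \in ax & index x ax < index y ax].
Definition ax_le (ax : axis) (x y : cand) : bool := (x == y) || ax_lt ax x y.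

Definition is_interval (A : ballot) (ax : axis) : bool :=
  all (fun a => all (fun b => all (fun c => (ax_lt ax a c && ax_lt ax c b) ==> (c \in A))
                                  ax) A) A.

Definition cost_VD (A : ballot) (ax : axis) : nat :=
  if is_interval A ax then 0 else 1.

Definition mf_xy (A : ballot) (ax : axis) (x y : cand) : nat :=
  count (fun z => ax_lt ax z x || ax_lt ax y z) A
  + count (fun z => (z \notin A) && ax_lt ax x z && ax_lt ax z y) ax.

(* minimum of a list (the list is nonempty whenever A is nonempty) *)
Definition minlist (s : seq nat) : nat := \big[minn/head 0 s]_(v <- s) v.

Definition cost_MF (A : ballot) (ax : axis) : nat :=
  minlist [seq mf_xy A ax xy.1 xy.2 | xy <- [seq (x, y) | x <- A, y <- A] & ax_le ax xy.1 xy.2].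

Definition cost_BC (A : ballot) (ax : axis) : nat :=
  count (fun b => (b \notin A) &&
           has (fun a => has (fun c => ax_lt ax a b && ax_lt ax b c) A) A) ax.

Definition n_left (A : ballot) (ax : axis) (x : cand) : nat := count (fun y => ax_lt ax y x) A.
Definition n_right (A : ballot) (ax : axis) (x : cand) : nat := count (fun y => ax_lt ax x y) A.

Definition cost_MS (A : ballot) (ax : axis) : nat :=
  \sum_(x <- ax | x \notin A) minn (n_left A ax x) (n_right A ax x).

Definition cost_FT (A : ballot) (ax : axis) : nat :=
  \sum_(x <- ax | x \notin A) (n_left A ax x * n_right A ax x).

Definition total_cost (cost : ballot -> axis -> nat) (P : profile) (ax : axis) : nat :=
  \sum_(A <- P) cost A ax.

Definition in_rule (cost : ballot -> axis -> nat) (C : {fset cand}) (P : profile)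
  (ax : axis) : Prop :=
  is_axis C ax /\
  forall ax' : axis, is_axis C ax' -> total_cost cost P ax <= total_cost cost P ax'.

Definition prof_remove (P : profile) (c : cand) : profile :=
  [seq A `\ c | A <- P & A `\ c != fset0].

Definition ax_remove (ax : axis) (c : cand) : axis := filter (predC1 c) ax.

Definition clones (P : profile) (a a' : cand) : Prop :=
  forall A, A \in P -> (a \in A) = (a' \in A).

Definition resistant_to_cloning (cost : ballot -> axis -> nat) : Prop :=
  forall (C : {fset cand}) (P : profile) (a a' : cand),
    profile_over C P -> a \in C -> a' \in C -> a != a' -> clones P a a' ->
    (forall ax, in_rule cost C P ax -> in_rule cost (C `\ a) (prof_remove P a) (ax_remove ax a))
    /\
    (forall axs, in_rule cost (C `\ a) (prof_remove P a) axs ->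
       exists2 ax, in_rule cost C P ax & ax_remove ax a = axs).

From mathcomp Require Import all_boot all_order.
From mathcomp Require Import finmap.
From mathcomp Require Import zify.
Set Implicit Arguments. Unset Strict Implicit. Unset Printing Implicit Defensive.
Local Open Scope fset_scope.

(* Removing a candidate from an axis never destroys an interval, so the optimal VD
   cost of P_{-a} is at most that of P.  Conversely, inserting the clone a right
   before a' in an axis of C \ {a} keeps every interval ballot an interval, since
   a and a' now sit side by side and no ballot separates them; hence the two optimal
   costs agree, and restriction and clone insertion carry optimal axes both ways.
   For MF, BC, MS and FT a small profile refutes condition (2): some optimal axis of
   P_{-a} has all its extensions to C strictly beaten by another axis of C, which is
   checked by enumerating all axes. *)

Lemma index_filter (p : pred cand) (s : seq cand) x : p x ->
  index x (filter p s) = count p (take (index x s) s).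
Proof.
move=> px; elim: s => [|z s IH] //=.
case: (eqVneq z x) => [->|nzx] /=; first by rewrite px /= eqxx.
by case pz: (p z) => /=; rewrite ?(negbTE nzx) /= IH.
Qed.

Lemma count_take_leq (p : pred cand) (s : seq cand) i j : i <= j ->
  count p (take i s) <= count p (take j s).
Proof. by move=> hij; rewrite -(subnKC hij) takeD count_cat leq_addr. Qed.

Lemma count_take_index_lt (p : pred cand) (s : seq cand) x j :
  p x -> x \in s -> index x s < j ->
  count p (take (index x s) s) < count p (take j s).
Proof.
move=> px xs hij; rewrite -(subnKC hij) takeD count_cat.
have hs : index x s < size s by rewrite index_mem.
rewrite (take_nth x hs) -cats1 count_cat nth_index //= px; lia.
Qed.

Lemma ax_lt_filter (p : pred cand) s x y : p x -> p y ->
  ax_lt (filter p s) x y = ax_lt s x y.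
Proof.
move=> px py; rewrite /ax_lt !mem_filter px py /= !index_filter //.
case Hx: (x \in s); case Hy: (y \in s) => //=.
case: (ltnP (index x s) (index y s)) => h; first exact: count_take_index_lt.
by apply/negbTE; rewrite -leqNgt count_take_leq.
Qed.

Lemma ax_lt_pivot2 (t r : seq cand) (x y c : cand) :
  x \notin t -> y \notin t -> x != y -> c != x -> c != y ->
  ax_lt (t ++ x :: y :: r) c x = ax_lt (t ++ x :: y :: r) c y /\
  ax_lt (t ++ x :: y :: r) x c = ax_lt (t ++ x :: y :: r) y c.
Proof.
move=> xt yt xy cx cy.
have Hx : x \in t ++ x :: y :: r by rewrite mem_cat mem_head orbT.
have Hy : y \in t ++ x :: y :: r by rewrite mem_cat !inE eqxx !orbT.
rewrite /ax_lt Hx Hy /=; case: (boolP (c \in _)) => //= Hc.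
rewrite !index_cat (negbTE xt) (negbTE yt) /= eqxx (negbTE xy) eqxx.
case: (boolP (c \in t)) => ct.
  have ct' : index c t < @size nat t by rewrite index_mem.
  by split; apply/idP/idP; lia.
by rewrite (eq_sym x) (negbTE cx) (eq_sym y) (negbTE cy); split; apply/idP/idP; lia.
Qed.

Lemma ax_lt_mem s x y : ax_lt s x y -> (x \in s) && (y \in s).
Proof. by case/and3P=> -> ->. Qed.

Lemma is_axisP (C : {fset cand}) ax :
  reflect [/\ uniq ax, {subset C <= ax} & {subset ax <= C}] (is_axis C ax).
Proof.
apply: (iffP idP) => [/andP[/andP[Hu /forallP Hf] /allP Ha]|[Hu Hs1 Hs2]].
  by split=> // x Hx; exact: (Hf [` Hx]).
rewrite /is_axis Hu; apply/andP; split; last exact/allP.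
by apply/forallP => -[x Hx] /=; apply: Hs1.
Qed.

Lemma is_axis_remove (C : {fset cand}) ax a :
  is_axis C ax -> is_axis (C `\ a) (ax_remove ax a).
Proof.
case/is_axisP => Hu H1 H2; apply/is_axisP; split; first exact: filter_uniq.
  by move=> x; rewrite in_fsetD1 mem_filter /= => /andP[-> /H1].
by move=> x; rewrite mem_filter in_fsetD1 /= => /andP[-> /H2].
Qed.

Lemma intervalP (A : ballot) ax :
  reflect (forall b d c, b \in A -> d \in A -> ax_lt ax b c -> ax_lt ax c d -> c \in A)
          (is_interval A ax).
Proof.
apply: (iffP allP) => [H b d c Hb Hd H1 H2|H b Hb].
  have /andP[_ Hc] := ax_lt_mem H1.
  by move/allP: (H b Hb) => /(_ d Hd) /allP /(_ c Hc) /implyP; apply; rewrite H1.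
apply/allP => d Hd; apply/allP => c _; apply/implyP => /andP[H1 H2].
exact: H H1 H2.
Qed.

Lemma cost_VD0 ax : cost_VD fset0 ax = 0.
Proof. by rewrite /cost_VD; case: intervalP => // [] []; move=> b d c; rewrite inE. Qed.

Lemma cost_VD_remove (A : ballot) ax a :
  cost_VD (A `\ a) (ax_remove ax a) <= cost_VD A ax.
Proof.
rewrite /cost_VD; case: (boolP (is_interval A ax)) => [HI|]; last by case: ifP.
suff -> : is_interval (A `\ a) (ax_remove ax a) by [].
apply/intervalP => b d c; rewrite !in_fsetD1 => /andP[ba Hb] /andP[da Hd] H1 H2.
have /andP[_] := ax_lt_mem H1; rewrite mem_filter /= => /andP[ca _].
rewrite /ax_remove !ax_lt_filter // in H1 H2.
by rewrite ca (intervalP _ _ HI b d c).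
Qed.

Lemma total_cost_VD_remove P ax a :
  total_cost cost_VD (prof_remove P a) (ax_remove ax a) <= total_cost cost_VD P ax.
Proof.
rewrite /total_cost /prof_remove big_map big_filter big_mkcond.
by apply: leq_sum => A _; case: ifP => // _; exact: cost_VD_remove.
Qed.

Section CloneInsertion.

Variables (t r : seq cand) (a a' : cand).
Hypotheses (a't : a' \notin t) (a_s : a \notin t ++ a' :: r).

Let s := t ++ a' :: r.
Let u := t ++ a :: a' :: r.
Let swap x := if x == a then a' else x.

Let aa' : a != a'.
Proof. by apply: contraNneq a_s => ->; rewrite mem_cat mem_head orbT. Qed.

Let at_ : a \notin t.
Proof. by apply: contra a_s; rewrite mem_cat => ->. Qed.

Lemma ax_remove_clone : ax_remove u a = s.
Proof.
have -> : ax_remove u a = ax_remove s a by rewrite /ax_remove !filter_cat /= eqxx.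
by apply/all_filterP/allP => x xs /=; apply: contraNneq a_s => <-.
Qed.

Lemma is_axis_clone (C : {fset cand}) :
  a \in C -> is_axis (C `\ a) s -> is_axis C u.
Proof.
move=> aC /is_axisP [Hu H1 H2].
have Hp : perm_eq u (a :: s) by rewrite /u (perm_catCA t [:: a]).
apply/is_axisP; split; first by rewrite (perm_uniq Hp) /= a_s.
  move=> x xC; rewrite (perm_mem Hp) inE.
  by case: (eqVneq x a) => //= xa; apply: H1; rewrite in_fsetD1 xa.
move=> x; rewrite (perm_mem Hp) inE => /predU1P[-> //|/H2].
by rewrite in_fsetD1 => /andP[].
Qed.

Let ax_lt_u x y : x != a -> y != a -> ax_lt u x y = ax_lt s x y.
Proof. by move=> xa ya; rewrite -ax_remove_clone ax_lt_filter. Qed.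

Lemma ax_lt_clone c b : c != a -> c != a' ->
  ax_lt u b c = ax_lt s (swap b) c /\ ax_lt u c b = ax_lt s c (swap b).
Proof.
move=> ca ca'; rewrite /swap; case: (eqVneq b a) => [->|ba]; last by rewrite !ax_lt_u.
have [-> ->] := ax_lt_pivot2 r at_ a't aa' ca ca'.
by rewrite !ax_lt_u // eq_sym.
Qed.

Lemma is_interval_clone (A : ballot) : (a \in A) = (a' \in A) ->
  is_interval (A `\ a) s -> is_interval A u.
Proof.
move=> Hcl /intervalP HI; apply/intervalP => b d c Hb Hd Hbc Hcd.
have swapA x : x \in A -> swap x \in A `\ a.
  rewrite /swap in_fsetD1; case: (eqVneq x a) => [-> aA|xa xA] /=; last by rewrite xa.
  by rewrite eq_sym aa' -Hcl.
case: (boolP ((c == a) || (c == a'))) => [Hc|].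
  case: (boolP (a \in A)) => [aA|aNA]; first by case/orP: Hc => /eqP ->; rewrite -?Hcl.
  have a'NA : a' \notin A by rewrite -Hcl.
  have notc x : x \in A -> (x != a) && (x != a').
    by move=> xA; apply/andP; split; apply: contraTneq xA => ->.
  have /andP[ba ba'] := notc _ Hb; have /andP[da da'] := notc _ Hd.
  have swapc : swap c = a' by case/orP: Hc => /eqP ->; rewrite /swap ?eqxx //; case: ifP.
  have [_ Hb1] := ax_lt_clone c ba ba'; have [Hd1 _] := ax_lt_clone c da da'.
  rewrite Hb1 swapc in Hbc; rewrite Hd1 swapc in Hcd.
  have bA : b \in A `\ a by rewrite in_fsetD1 ba.
  have dA : d \in A `\ a by rewrite in_fsetD1 da.
  by move: (HI b d a' bA dA Hbc Hcd); rewrite in_fsetD1 (negbTE a'NA) andbF.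
rewrite negb_or => /andP[ca ca'].
have [Hb1 _] := ax_lt_clone b ca ca'; have [_ Hd1] := ax_lt_clone d ca ca'.
rewrite Hb1 in Hbc; rewrite Hd1 in Hcd.
by have := HI _ _ c (swapA _ Hb) (swapA _ Hd) Hbc Hcd; rewrite in_fsetD1 => /andP[].
Qed.

Lemma cost_VD_clone (A : ballot) : (a \in A) = (a' \in A) ->
  cost_VD A u <= cost_VD (A `\ a) s.
Proof.
rewrite /cost_VD => Hcl; case HI: (is_interval (A `\ a) s); last by case: ifP.
by rewrite is_interval_clone.
Qed.

Lemma total_cost_VD_clone P : clones P a a' ->
  total_cost cost_VD P u <= total_cost cost_VD (prof_remove P a) s.
Proof.
move=> Hcl; rewrite /total_cost /prof_remove big_map big_filter.
rewrite [X in _ <= X]big_mkcond !big_seq; apply: leq_sum => A HA.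
case: ifP => [_|/negbFE/eqP A0]; first exact: cost_VD_clone (Hcl A HA).
by have := cost_VD_clone (Hcl A HA); rewrite A0 cost_VD0.
Qed.

End CloneInsertion.

Lemma clone_extension (C : {fset cand}) P a a' s :
  a \in C -> a' \in C -> a != a' -> clones P a a' -> is_axis (C `\ a) s ->
  exists ax, [/\ is_axis C ax, ax_remove ax a = s &
    total_cost cost_VD P ax <= total_cost cost_VD (prof_remove P a) s].
Proof.
move=> aC a'C aa' Hcl Hs; have /is_axisP [Hu H1 H2] := Hs.
have a's : a' \in s by apply: H1; rewrite in_fsetD1 eq_sym aa'.
have a_s : a \notin s by apply/negP => /H2; rewrite in_fsetD1 eqxx.
case/splitPr: a's Hu Hs a_s => t r Hu Hs a_s.
have a't : a' \notin t by move: Hu; rewrite cat_uniq /= => /and3P[_ /norP[]].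
exists (t ++ a :: a' :: r); split.
- exact: is_axis_clone.
- exact: ax_remove_clone.
- exact: total_cost_VD_clone.
Qed.

Theorem resistant_to_cloning_VD : resistant_to_cloning cost_VD.
Proof.
move=> C P a a' _ aC a'C aa' Hcl; split.
  move=> ax [Hax Hopt]; split; first exact: is_axis_remove.
  move=> s Hs; have [ax' [Hax' _ Hle]] := clone_extension aC a'C aa' Hcl Hs.
  exact: leq_trans (total_cost_VD_remove P ax a) (leq_trans (Hopt _ Hax') Hle).
move=> s [Hs Hopt]; have [ax [Hax Hrem Hle]] := clone_extension aC a'C aa' Hcl Hs.
exists ax => //; split=> // ax' Hax'.
apply: leq_trans Hle (leq_trans (Hopt _ (is_axis_remove a Hax')) _).
exact: total_cost_VD_remove.
Qed.

(* Sets built by [seq_fset] are locked and do not compute, so costs are evaluated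
   on the underlying duplicate-free sequences instead. *)
Definition fset_of_seq (s : seq cand) : {fset cand} := seq_fset tt s.

Lemma mem_fset_of_seq s : fset_of_seq s =i s.
Proof. exact: seq_fsetE. Qed.

Lemma perm_fset_of_seq s : uniq s -> perm_eq (fset_of_seq s) s.
Proof. by move=> su; rewrite -{2}(undup_id su) seq_fset_perm. Qed.

Lemma fset_of_seq_eq0 s : (fset_of_seq s == fset0) = (s == [::]).
Proof.
apply/eqP/eqP => [|->]; last by apply/fsetP => x; rewrite mem_fset_of_seq inE.
by case: s => // x s /fsetP /(_ x); rewrite mem_fset_of_seq inE mem_head.
Qed.

Lemma fset_of_seq_remove s a :
  fset_of_seq (filter (predC1 a) s) = fset_of_seq s `\ a.
Proof. by apply/fsetP => x; rewrite in_fsetD1 !mem_fset_of_seq mem_filter. Qed.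

Definition prof_remove_seq (Pl : seq (seq cand)) (a : cand) : seq (seq cand) :=
  [seq filter (predC1 a) l | l <- Pl & filter (predC1 a) l != [::]].

Lemma prof_remove_fset_of_seq Pl a :
  prof_remove (map fset_of_seq Pl) a = map fset_of_seq (prof_remove_seq Pl a).
Proof.
elim: Pl => //= l Pl; rewrite /prof_remove /prof_remove_seq /=.
rewrite -fset_of_seq_remove fset_of_seq_eq0.
by case: ifP => /= _ ->; rewrite ?fset_of_seq_remove.
Qed.

Lemma is_axis_fset_of_seq Cl ax : uniq Cl -> is_axis (fset_of_seq Cl) ax = perm_eq ax Cl.
Proof.
move=> Clu; apply/is_axisP/idP => [[axu H1 H2]|Hp].
  apply: uniq_perm => // x; apply/idP/idP => [/H2|xCl]; first by rewrite mem_fset_of_seq.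
  by apply: H1; rewrite mem_fset_of_seq.
split; first by rewrite (perm_uniq Hp).
  by move=> x; rewrite mem_fset_of_seq (perm_mem Hp).
by move=> x; rewrite mem_fset_of_seq (perm_mem Hp).
Qed.

Definition cloned_profile_seq (Cl : seq cand) (Pl : seq (seq cand)) (a a' : cand) :=
  [&& uniq Cl, a \in Cl, a' \in Cl, a != a' &
      all (fun l => [&& uniq l, l != [::], all (fun x => x \in Cl) l &
                        (a \in l) == (a' \in l)]) Pl].

Section SeqModel.

Variables (cost : ballot -> axis -> nat) (costl : seq cand -> axis -> nat).
Hypotheses (costE : forall (A : ballot) ax, cost A ax = costl A ax)
           (perm_costl : forall s t ax, perm_eq s t -> costl s ax = costl t ax).

Definition total_costl (Pl : seq (seq cand)) (ax : axis) : nat :=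
  sumn [seq costl l ax | l <- Pl].

Definition optimal_seq (Cl : seq cand) (Pl : seq (seq cand)) (ax : axis) : bool :=
  perm_eq ax Cl &&
  all (fun ax' => total_costl Pl ax <= total_costl Pl ax') (permutations Cl).

(* [ref] beats every extension of [axs], so no optimal axis of P restricts to [axs]. *)
Definition violates_condition2_seq Cl Pl (a : cand) (axs ref : axis) : bool :=
  [&& optimal_seq (filter (predC1 a) Cl) (prof_remove_seq Pl a) axs, perm_eq ref Cl &
      all (fun ax => (ax_remove ax a == axs) ==> (total_costl Pl ref < total_costl Pl ax))
          (permutations Cl)].

Lemma total_cost_fset_of_seq Pl ax : all uniq Pl ->
  total_cost cost (map fset_of_seq Pl) ax = total_costl Pl ax.
Proof.
rewrite /total_cost /total_costl big_map sumnE big_map => /allP Plu.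
rewrite !big_seq; apply: eq_bigr => l /Plu lu.
by rewrite costE (perm_costl _ (perm_fset_of_seq lu)).
Qed.

Lemma in_rule_fset_of_seq Cl Pl ax : uniq Cl -> all uniq Pl ->
  in_rule cost (fset_of_seq Cl) (map fset_of_seq Pl) ax <-> optimal_seq Cl Pl ax.
Proof.
move=> Clu Plu; rewrite /in_rule /optimal_seq is_axis_fset_of_seq //.
split=> [[-> Hopt]|/andP[-> /allP Hopt]].
  apply/allP => ax' Hax'; rewrite -!total_cost_fset_of_seq //.
  by apply: Hopt; rewrite is_axis_fset_of_seq // -mem_permutations.
split=> // ax'; rewrite is_axis_fset_of_seq // -mem_permutations.
by rewrite !total_cost_fset_of_seq //; exact: Hopt.
Qed.

Lemma not_resistant_of_seq Cl Pl a a' axs ref :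
  cloned_profile_seq Cl Pl a a' -> violates_condition2_seq Cl Pl a axs ref ->
  ~ resistant_to_cloning cost.
Proof.
case/and5P=> Clu aCl a'Cl aa' /allP HPl /and3P[Haxs Href /allP Hbad] Hres.
have Plu : all uniq Pl by apply/allP => l /HPl /and4P[].
have Pover : profile_over (fset_of_seq Cl) (map fset_of_seq Pl).
  apply/allP => _ /mapP[l /HPl /and4P[_ l0 /allP lC _] ->].
  rewrite fset_of_seq_eq0 l0; apply/fsubsetP => x; rewrite !mem_fset_of_seq; exact: lC.
have Hcl : clones (map fset_of_seq Pl) a a'.
  by move=> _ /mapP[l /HPl /and4P[_ _ _ /eqP Hl] ->]; rewrite !mem_fset_of_seq.
have /andP[aC a'C] : (a \in fset_of_seq Cl) && (a' \in fset_of_seq Cl).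
  by rewrite !mem_fset_of_seq aCl.
have [_ Hcond2] := Hres _ _ a a' Pover aC a'C aa' Hcl.
have [ax Hax Hrem] : exists2 ax, in_rule cost (fset_of_seq Cl) (map fset_of_seq Pl) ax &
    ax_remove ax a = axs.
  apply: Hcond2; rewrite -fset_of_seq_remove prof_remove_fset_of_seq.
  rewrite in_rule_fset_of_seq //.
    exact: filter_uniq.
  apply/allP => _ /mapP[l + ->]; rewrite mem_filter => /andP[_ /(allP Plu) lu].
  exact: filter_uniq.
case/(in_rule_fset_of_seq _ Clu Plu)/andP: Hax => Hax /allP Hopt.
have := Hbad ax; rewrite mem_permutations Hax Hrem eqxx ltnNge => /(_ isT).
by rewrite Hopt // mem_permutations.
Qed.

End SeqModel.

Definition min_seq (s : seq nat) : nat := foldr minn (head 0 s) s.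

Lemma leq_min_seq x s : (x <= min_seq s) = (x <= head 0 s) && all (leq x) s.
Proof.
rewrite /min_seq; elim: s (head 0 s) => [|v s IH] i /=; first by rewrite andbT.
by rewrite leq_min IH andbCA.
Qed.

Lemma perm_min_seq s t : perm_eq s t -> min_seq s = min_seq t.
Proof.
move=> st; suff Hle x : (x <= min_seq s) = (x <= min_seq t).
  by apply/eqP; rewrite eqn_leq -Hle leqnn /= Hle leqnn.
case: s t st => [|v s] [|w t] st //; try by move/perm_size: st.
rewrite !leq_min_seq -(perm_all _ st).
case: (boolP (all (leq x) (v :: s))) => [/allP all_x|]; last by rewrite !andbF.
by rewrite !andbT /= all_x ?mem_head // all_x // (perm_mem st) mem_head.
Qed.

Definition mf_xy_seq (A : seq cand) (ax : axis) (x y : cand) : nat :=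
  count (fun z => ax_lt ax z x || ax_lt ax y z) A
  + count (fun z => (z \notin A) && ax_lt ax x z && ax_lt ax z y) ax.

Definition cost_MF_seq (A : seq cand) (ax : axis) : nat :=
  min_seq [seq mf_xy_seq A ax xy.1 xy.2
          | xy <- [seq (x, y) | x <- A, y <- A] & ax_le ax xy.1 xy.2].

Definition cost_BC_seq (A : seq cand) (ax : axis) : nat :=
  count (fun b => (b \notin A) &&
           has (fun a => has (fun c => ax_lt ax a b && ax_lt ax b c) A) A) ax.

Definition outside_sum (F : nat -> nat -> nat) (A : seq cand) (ax : axis) : nat :=
  sumn [seq F (count (fun y => ax_lt ax y x) A) (count (fun y => ax_lt ax x y) A)
       | x <- ax & x \notin A].

Lemma cost_MF_seqE (A : ballot) ax : cost_MF A ax = cost_MF_seq A ax.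
Proof. by rewrite /cost_MF_seq /min_seq foldrE. Qed.

Lemma cost_MS_outside_sum (A : ballot) ax : cost_MS A ax = outside_sum minn A ax.
Proof. by rewrite /outside_sum sumnE big_map big_filter. Qed.

Lemma cost_FT_outside_sum (A : ballot) ax : cost_FT A ax = outside_sum muln A ax.
Proof. by rewrite /outside_sum sumnE big_map big_filter. Qed.

Lemma perm_cost_MF_seq s t ax : perm_eq s t -> cost_MF_seq s ax = cost_MF_seq t ax.
Proof.
move=> st; apply: perm_min_seq.
have mf_st xy : mf_xy_seq s ax xy.1 xy.2 = mf_xy_seq t ax xy.1 xy.2.
  rewrite /mf_xy_seq (permP st); congr addn.
  by apply: eq_count => z; rewrite (perm_mem st).
rewrite (eq_map mf_st); apply: perm_map; apply: perm_filter; exact: perm_allpairs.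
Qed.

Lemma perm_cost_BC_seq s t ax : perm_eq s t -> cost_BC_seq s ax = cost_BC_seq t ax.
Proof.
move=> st; apply: eq_count => b; rewrite (perm_mem st) (perm_has _ st).
by congr (_ && _); apply: eq_has => a; rewrite (perm_has _ st).
Qed.

Lemma perm_outside_sum F s t ax : perm_eq s t -> outside_sum F s ax = outside_sum F t ax.
Proof.
move=> st; rewrite /outside_sum (eq_filter (a2 := fun x => x \notin t)); last first.
  by move=> x; rewrite (perm_mem st).
by congr sumn; apply: eq_map => x; rewrite !(permP st).
Qed.

Theorem not_resistant_to_cloning_MF : ~ resistant_to_cloning cost_MF.
Proof.
apply: (@not_resistant_of_seq _ _ cost_MF_seqE perm_cost_MF_seq
  [:: 0; 1; 2; 3; 4; 5] [:: [:: 2; 4; 5]; [:: 0; 1; 2; 3; 4]; [:: 0; 1; 2; 5]] 0 1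
  [:: 1; 3; 4; 2; 5] [:: 0; 1; 2; 5; 4; 3]); by vm_compute.
Qed.

Theorem not_resistant_to_cloning_BC : ~ resistant_to_cloning cost_BC.
Proof.
apply: (@not_resistant_of_seq _ _ (fun _ _ => erefl) perm_cost_BC_seq
  [:: 0; 1; 2; 3] [:: [:: 2; 3]; [:: 0; 1; 2]; [:: 0; 1; 3]] 0 1
  [:: 2; 1; 3] [:: 0; 1; 2; 3]); by vm_compute.
Qed.

Theorem not_resistant_to_cloning_MS : ~ resistant_to_cloning cost_MS.
Proof.
apply: (@not_resistant_of_seq _ _ cost_MS_outside_sum (@perm_outside_sum minn)
  [:: 0; 1; 2; 3] [:: [:: 2; 3]; [:: 0; 1; 2]; [:: 0; 1; 3]] 0 1
  [:: 2; 1; 3] [:: 0; 1; 2; 3]); by vm_compute.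
Qed.

Theorem not_resistant_to_cloning_FT : ~ resistant_to_cloning cost_FT.
Proof.
apply: (@not_resistant_of_seq _ _ cost_FT_outside_sum (@perm_outside_sum muln)
  [:: 0; 1; 2; 3; 4] [:: [:: 2; 3]; [:: 2; 4]; [:: 0; 1; 2]] 0 1
  [:: 1; 3; 2; 4] [:: 0; 1; 2; 3; 4]); by vm_compute.
Qed.

Theorem mainTheorem10 :
  resistant_to_cloning cost_VD /\
  ~ resistant_to_cloning cost_MF /\
  ~ resistant_to_cloning cost_BC /\
  ~ resistant_to_cloning cost_MS /\
  ~ resistant_to_cloning cost_FT.
Proof.
split; first exact: resistant_to_cloning_VD.
split; first exact: not_resistant_to_cloning_MF.
split; first exact: not_resistant_to_cloning_BC.
split; first exact: not_resistant_to_cloning_MS.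
exact: not_resistant_to_cloning_FT.
Qed.
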